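(* Let $N\ge1$, $B\in\mathbb{R}$, and for $i=1,\dots,N$ let $D_i>0$, $b_i>0$, $a_i\in\mathbb{R}$. For $\lambda\in(0,\infty)$ define $$q_i(\lambda):=\frac{W\big(\exp(a_i+\frac{b_i}{\lambda}-1)\big)}{W\big(\exp(a_i+\frac{b_i}{\lambda}-1)\big)+1},$$ let $c_i(q):=-\dfrac{a_i}{b_i}-\dfrac{1}{b_i}\big[\ln(1-q)-\ln q\big]$ for $q\in(0,1)$, and define $$f(\lambda):=\sum_{i=1}^N D_i q_i(\lambda),\qquad g(\lambda):=\sum_{i=1}^N D_i q_i(\lambda)\,c_i(q_i(\lambda))-B.$$ Then $f$ and $g$ are strictly decreasing on $(0,\infty)$, and $\lim_{\lambda\to0^+}g(\lambda)>0$.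
   Context: $W$ denotes the Lambert $W$ function on $(0,\infty)$: the inverse of $x\mapsto xe^x$ on $(0,\infty)$. Note $q_i(\lambda)\in(0,1)$. Here $f$ is total sales and $g$ the exceeded budget as functions of the dual variable $\lambda$. *)

From Stdlib Require Import Reals Lra List ClassicalEpsilon.
From Coquelicot Require Import Coquelicot.
Open Scope R_scope.

(* Lambert W on (0,oo): the (unique) w > 0 with w * exp w = x.
   For x > 0 such a w exists and is unique; outside (0,oo) the value is
   unspecified (never used). *)
Definition LambertW (x : R) : R :=
  epsilon (inhabits 0) (fun w => 0 < w /\ w * exp w = x).

Definition sumN (N : nat) (F : nat -> R) : R :=
  fold_right Rplus 0 (map F (seq 0 N)).

Definition q_i (a b : R) (lam : R) : R :=
  let w := LambertW (exp (a + b / lam - 1)) in w / (w + 1).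

Definition c_i (a b : R) (q : R) : R :=
  - a / b - / b * (ln (1 - q) - ln q).

Definition f_sales (N : nat) (D a b : nat -> R) (lam : R) : R :=
  sumN N (fun i => D i * q_i (a i) (b i) lam).

Definition g_budget (N : nat) (D a b : nat -> R) (B : R) (lam : R) : R :=
  sumN N (fun i => D i * q_i (a i) (b i) lam *
                   c_i (a i) (b i) (q_i (a i) (b i) lam)) - B.

(* By definition of the Lambert W function, w := W(exp(a + b/λ - 1)) satisfies
   ln w + w = a + b/λ - 1, so w is a strictly decreasing function of λ that
   blows up as λ → 0+.  In terms of w the purchase probability is q = w/(w+1)
   and the price is c(q) = (ln w - a)/b, so q and the spend
   q c(q) = w (ln w - a) / (b (w+1)) both increase with w: the spend because
   the numerator ln w + w - a + 1 = b/λ of its derivative is positive.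
   Summing over i gives the monotonicity of f and g, and the spend, hence g,
   tends to +∞ as λ → 0+. *)

From Stdlib Require Import Reals Lra List ClassicalEpsilon.
From Coquelicot Require Import Coquelicot.
Open Scope R_scope.

Lemma ln_le_sub_1 x : 0 < x -> ln x <= x - 1.
Proof.
  intros Hx. pose proof (exp_ineq1_le (ln x)) as H. rewrite exp_ln in H by exact Hx. lra.
Qed.

Lemma lt_div_succ x y : 0 <= x -> x < y -> x / (x + 1) < y / (y + 1).
Proof.
  intros Hx Hxy.
  apply Rmult_lt_reg_r with ((x + 1) * (y + 1)); [nra|].
  replace (x / (x + 1) * ((x + 1) * (y + 1))) with (x * (y + 1)) by (field; lra).
  replace (y / (y + 1) * ((x + 1) * (y + 1))) with (y * (x + 1)) by (field; lra).
  lra.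
Qed.

Lemma filterlim_affine_p_infty {T : Type} {F : (T -> Prop) -> Prop} {FF : Filter F}
  (f : T -> R) (k c : R) :
  0 < k -> filterlim f F (Rbar_locally p_infty) ->
  filterlim (fun x => k * f x + c) F (Rbar_locally p_infty).
Proof.
  intros Hk Hf P [M HM]. unfold filtermap.
  apply (filter_imp (fun x => (M - c) / k < f x)).
  - intros x Hx. apply HM.
    apply (Rmult_lt_compat_l k) in Hx; [|exact Hk].
    replace (k * ((M - c) / k)) with (M - c) in Hx by (field; lra). lra.
  - apply (Hf (fun y => (M - c) / k < y)). exists ((M - c) / k). tauto.
Qed.

Lemma sumN_S N F : sumN (S N) F = sumN N F + F N.
Proof.
  unfold sumN. rewrite seq_S, map_app, fold_right_app. simpl.
  induction (map F (seq 0 N)) as [|x l IH]; simpl; [|rewrite IH]; ring.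
Qed.

Lemma sumN_lt N F G : (1 <= N)%nat -> (forall i, (i < N)%nat -> F i < G i) ->
  sumN N F < sumN N G.
Proof.
  intros HN. induction HN as [|N HN IH]; intros H.
  - unfold sumN. simpl. specialize (H 0%nat (Nat.lt_0_succ 0)). lra.
  - rewrite !sumN_S. apply Rplus_lt_compat.
    + apply IH. intros i Hi. apply H, Nat.lt_lt_succ_r, Hi.
    + apply H, Nat.lt_succ_diag_r.
Qed.

Lemma filterlim_sumN_p_infty {T : Type} {F : (T -> Prop) -> Prop} {FF : Filter F}
  N (G : nat -> T -> R) :
  (1 <= N)%nat -> (forall i, (i < N)%nat -> filterlim (G i) F (Rbar_locally p_infty)) ->
  filterlim (fun x => sumN N (fun i => G i x)) F (Rbar_locally p_infty).
Proof.
  intros HN. induction HN as [|N HN IH]; intros H.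
  - apply (filterlim_ext (G 0%nat)); [intros x; unfold sumN; simpl; ring | auto].
  - apply (filterlim_ext (fun x => sumN N (fun i => G i x) + G N x));
      [intros x; rewrite sumN_S; reflexivity|].
    apply (filterlim_comp_2 _ _ Rplus (IH (fun i Hi => H i (Nat.lt_lt_succ_r _ _ Hi)))
             (H N (Nat.lt_succ_diag_r N))).
    now apply filterlim_Rbar_plus.
Qed.

Lemma LambertW_spec x : 0 < x -> 0 < LambertW x /\ LambertW x * exp (LambertW x) = x.
Proof.
  intros Hx. unfold LambertW. apply epsilon_spec.
  set (h := fun w => w * exp w - x).
  assert (Hh : continuity h).
  { unfold h. apply continuity_minus; [|apply continuity_const; intros ? ?; reflexivity].
    apply (continuity_mult id exp); apply derivable_continuous;
      [apply derivable_id | apply derivable_exp]. }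
  assert (Hh0 : h 0 < 0) by (unfold h; rewrite exp_0; lra).
  assert (Hhx : 0 < h x).
  { unfold h. assert (1 + x < exp x) by (apply exp_ineq1; lra). nra. }
  destruct (IVT h 0 x Hh Hx Hh0 Hhx) as [w [Hw Hhw]].
  exists w. unfold h in Hhw.
  destruct (Req_dec w 0) as [->|]; [rewrite exp_0 in Hhw; lra | split; lra].
Qed.

Lemma LambertW_exp_pos t : 0 < LambertW (exp t).
Proof. apply LambertW_spec, exp_pos. Qed.

Lemma ln_LambertW_exp t : ln (LambertW (exp t)) + LambertW (exp t) = t.
Proof.
  destruct (LambertW_spec (exp t) (exp_pos t)) as [Hw E].
  set (w := LambertW (exp t)) in *.
  rewrite <- (ln_exp t), <- E, ln_mult, ln_exp by (auto using exp_pos).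
  ring.
Qed.

Lemma LambertW_exp_lt t1 t2 : t1 < t2 -> LambertW (exp t1) < LambertW (exp t2).
Proof.
  intros Ht.
  pose proof (ln_LambertW_exp t1). pose proof (ln_LambertW_exp t2).
  destruct (Rlt_or_le (LambertW (exp t1)) (LambertW (exp t2))) as [|Hle]; [assumption|].
  pose proof (ln_le _ _ (LambertW_exp_pos t2) Hle). lra.
Qed.

Lemma filterlim_LambertW_exp :
  filterlim (fun t => LambertW (exp t)) (Rbar_locally p_infty) (Rbar_locally p_infty).
Proof.
  apply (filterlim_ge_p_infty (fun t => / 2 * t + 0)).
  - apply filter_forall. intros t.
    pose proof (ln_LambertW_exp t).
    pose proof (ln_le_sub_1 _ (LambertW_exp_pos t)). lra.
  - apply (filterlim_affine_p_infty (fun t => t)); [lra | apply filterlim_id].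
Qed.

Lemma c_i_logistic a b w : 0 < w -> c_i a b (w / (w + 1)) = (ln w - a) / b.
Proof.
  intros Hw. unfold c_i.
  replace (1 - w / (w + 1)) with (/ (w + 1)) by (field; lra).
  unfold Rdiv at 2.
  rewrite ln_mult, !ln_Rinv by (try apply Rinv_0_lt_compat; lra).
  unfold Rdiv. ring.
Qed.

Definition unit_spend (a b w : R) : R := w / (w + 1) * ((ln w - a) / b).

Lemma unit_spend_lt a b w1 w2 : 0 < b -> 0 < w1 -> w1 < w2 -> a - 1 < ln w1 + w1 ->
  unit_spend a b w1 < unit_spend a b w2.
Proof.
  intros Hb Hw1 Hw12 Hpos. unfold unit_spend.
  set (u := ln w1 - a). set (L := ln w2 - ln w1).
  assert (HL : w2 - w1 <= w2 * L).
  { pose proof (ln_le_sub_1 (w1 / w2) ltac:(apply Rdiv_lt_0_compat; lra)) as H.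
    unfold Rdiv in H. rewrite ln_mult, ln_Rinv in H by (try apply Rinv_0_lt_compat; lra).
    apply (Rmult_le_compat_l w2) in H; [|lra].
    replace (w2 * (w1 * / w2 - 1)) with (w1 - w2) in H by (field; lra).
    unfold L. lra. }
  replace (ln w2 - a) with (u + L) by (unfold u, L; ring).
  apply Rmult_lt_reg_r with (b * (w1 + 1) * (w2 + 1)); [apply Rmult_lt_0_compat; nra|].
  replace (w1 / (w1 + 1) * (u / b) * (b * (w1 + 1) * (w2 + 1)))
    with (w1 * u * (w2 + 1)) by (field; lra).
  replace (w2 / (w2 + 1) * ((u + L) / b) * (b * (w1 + 1) * (w2 + 1)))
    with (w2 * (u + L) * (w1 + 1)) by (field; lra).
  (* The difference of the two sides is u (w2 - w1) + w2 L (w1 + 1) >= (w2 - w1) (u + w1 + 1). *)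
  assert (0 < (w2 - w1) * (u + w1 + 1)) by (apply Rmult_lt_0_compat; unfold u; lra).
  nra.
Qed.

Lemma filterlim_unit_spend a b : 0 < b ->
  filterlim (unit_spend a b) (Rbar_locally p_infty) (Rbar_locally p_infty).
Proof.
  intros Hb.
  apply (filterlim_ge_p_infty (fun w => / (2 * b) * ln w + - a / (2 * b))).
  - exists (Rmax 1 (exp a)). intros w Hw.
    pose proof (Rmax_l 1 (exp a)). pose proof (Rmax_r 1 (exp a)).
    assert (Ha : a <= ln w) by (rewrite <- (ln_exp a); apply ln_le; [apply exp_pos | lra]).
    assert (Hq : / 2 <= w / (w + 1)).
    { apply Rmult_le_reg_r with (2 * (w + 1)); [lra|].
      replace (w / (w + 1) * (2 * (w + 1))) with (2 * w) by (field; lra). lra. }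
    assert (Hc : 0 <= (ln w - a) / b) by (apply Rdiv_le_0_compat; lra).
    unfold unit_spend.
    replace (/ (2 * b) * ln w + - a / (2 * b)) with (/ 2 * ((ln w - a) / b)) by (field; lra).
    apply Rmult_le_compat_r; assumption.
  - apply filterlim_affine_p_infty; [apply Rinv_0_lt_compat; lra | exact is_lim_ln_p].
Qed.

Section OneProduct.

Variables a b : R.
Hypothesis Hb : 0 < b.

Definition w_i (lam : R) : R := LambertW (exp (a + b / lam - 1)).

Lemma w_i_pos lam : 0 < w_i lam.
Proof. apply LambertW_exp_pos. Qed.

Lemma w_i_decreasing l1 l2 : 0 < l1 -> l1 < l2 -> w_i l2 < w_i l1.
Proof.
  intros H1 H12. apply LambertW_exp_lt.
  enough (b / l2 < b / l1) by lra.
  apply Rmult_lt_compat_l; [exact Hb|]. apply Rinv_lt_contravar; nra.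
Qed.

Lemma filterlim_w_i : filterlim w_i (at_right 0) (Rbar_locally p_infty).
Proof.
  apply (filterlim_comp _ _ _ _ (fun t => LambertW (exp t)) _ (Rbar_locally p_infty));
    [|exact filterlim_LambertW_exp].
  apply (filterlim_ext (fun lam => b * / lam + (a - 1))); [intros lam; unfold Rdiv; ring|].
  apply filterlim_affine_p_infty; [exact Hb | exact filterlim_Rinv_0_right].
Qed.

Lemma q_i_decreasing l1 l2 : 0 < l1 -> l1 < l2 -> q_i a b l2 < q_i a b l1.
Proof.
  intros H1 H12. apply lt_div_succ; [left; apply w_i_pos | exact (w_i_decreasing l1 l2 H1 H12)].
Qed.

Lemma spend_q_i lam : q_i a b lam * c_i a b (q_i a b lam) = unit_spend a b (w_i lam).
Proof. unfold q_i. fold (w_i lam). rewrite c_i_logistic by apply w_i_pos. reflexivity. Qed.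

Lemma spend_decreasing l1 l2 : 0 < l1 -> l1 < l2 ->
  q_i a b l2 * c_i a b (q_i a b l2) < q_i a b l1 * c_i a b (q_i a b l1).
Proof.
  intros H1 H12. rewrite !spend_q_i.
  apply unit_spend_lt; [exact Hb | apply w_i_pos | exact (w_i_decreasing l1 l2 H1 H12)|].
  unfold w_i. rewrite ln_LambertW_exp.
  enough (0 < b / l2) by lra. apply Rdiv_lt_0_compat; lra.
Qed.

Lemma filterlim_spend :
  filterlim (fun lam => q_i a b lam * c_i a b (q_i a b lam)) (at_right 0) (Rbar_locally p_infty).
Proof.
  apply (filterlim_ext (fun lam => unit_spend a b (w_i lam))); [intros; symmetry; apply spend_q_i|].
  eapply filterlim_comp; [exact filterlim_w_i | exact (filterlim_unit_spend a b Hb)].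
Qed.

End OneProduct.

Theorem theorem4 (N : nat) (B : R) (D b a : nat -> R)
  (HN : (1 <= N)%nat)
  (HD : forall i, (i < N)%nat -> 0 < D i)
  (Hb : forall i, (i < N)%nat -> 0 < b i) :
  (forall l1 l2, 0 < l1 -> l1 < l2 -> f_sales N D a b l2 < f_sales N D a b l1) /\
  (forall l1 l2, 0 < l1 -> l1 < l2 -> g_budget N D a b B l2 < g_budget N D a b B l1) /\
  (exists l : Rbar, filterlim (g_budget N D a b B) (at_right 0) (Rbar_locally l) /\ Rbar_lt 0 l).
Proof.
  split; [|split].
  - intros l1 l2 H1 H12. apply sumN_lt; [exact HN|]. intros i Hi.
    apply Rmult_lt_compat_l; [auto | apply q_i_decreasing; auto].
  - intros l1 l2 H1 H12. apply Rplus_lt_compat_r, sumN_lt; [exact HN|]. intros i Hi.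
    rewrite !Rmult_assoc. apply Rmult_lt_compat_l; [auto | apply spend_decreasing; auto].
  - exists p_infty. split; [|exact I].
    apply (filterlim_ext (fun lam => 1 * sumN N (fun i =>
             D i * q_i (a i) (b i) lam * c_i (a i) (b i) (q_i (a i) (b i) lam)) + - B));
      [intros; unfold g_budget; ring|].
    apply filterlim_affine_p_infty, filterlim_sumN_p_infty; [lra | exact HN|]. intros i Hi.
    apply (filterlim_ext (fun lam => D i * (q_i (a i) (b i) lam *
             c_i (a i) (b i) (q_i (a i) (b i) lam)) + 0)); [intros; ring|].
    apply filterlim_affine_p_infty; [auto | apply filterlim_spend; auto].
Qed.
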